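(* Let $H$ be a group, let $\phi\in\operatorname{Aut}(H)$ and let $K$ be a proper subgroup of $H$ such that $K$ is a proper subgroup of its normalizer $N_H(K)$ and $K$ contains an element of infinite order. Let $G=H\ast_{(K,\phi)}=\langle H, t;\ tkt^{-1}=\phi(k),\ k\in K\rangle$. Then $\mathbb{Z}\times\mathbb{Z}$ embeds into $G$.
   Context: For a group $H$, $\phi\in\operatorname{Aut}(H)$ and a proper subgroup $K\lneq H$, the automorphism-induced HNN-extension $H\ast_{(K,\phi)}$ is the group given by the relative presentation $\langle H, t;\ tkt^{-1}=\phi(k),\ k\in K\rangle$. *)

From Stdlib Require Import ZArith.

Record group := Group {
  carrier :> Type;
  gmul : carrier -> carrier -> carrier;
  gone : carrier;
  ginv : carrier -> carrier;
  gmulA : forall x y z, gmul x (gmul y z) = gmul (gmul x y) z;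
  gmul1l : forall x, gmul gone x = x;
  gmul1r : forall x, gmul x gone = x;
  gmulVl : forall x, gmul (ginv x) x = gone;
  gmulVr : forall x, gmul x (ginv x) = gone
}.

Arguments gmul {g}.
Arguments gone {g}.
Arguments ginv {g}.

Fixpoint gpow {G : group} (x : G) (n : nat) : G :=
  match n with O => gone | S m => gmul x (gpow x m) end.

Definition is_hom {G L : group} (f : G -> L) : Prop :=
  forall x y, f (gmul x y) = gmul (f x) (f y).

Definition injective {A B : Type} (f : A -> B) : Prop :=
  forall x y, f x = f y -> x = y.

Definition is_aut {G : group} (phi : G -> G) : Prop :=
  is_hom phi /\ injective phi /\ (forall y, exists x, phi x = y).

Definition is_subgroup {G : group} (K : G -> Prop) : Prop :=
  K gone /\ (forall x y, K x -> K y -> K (gmul x y)) /\ (forall x, K x -> K (ginv x)).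

Definition proper_sub {G : group} (K : G -> Prop) : Prop := exists h : G, ~ K h.

Definition normalizer {G : group} (K : G -> Prop) : G -> Prop :=
  fun h => forall k, K k <-> K (gmul h (gmul k (ginv h))).

(* K is properly contained in its normalizer (K <= N_H(K) always holds for a subgroup) *)
Definition proper_in_normalizer {G : group} (K : G -> Prop) : Prop :=
  exists h, normalizer K h /\ ~ K h.

Definition infinite_order {G : group} (x : G) : Prop :=
  forall n : nat, gpow x (S n) <> gone.

(* The automorphism-induced HNN extension H *_(K,phi) = < H, t ; t k t^-1 = phi k, k in K >,
   characterised by the universal property of this relative presentation:
   (G, iota, t) satisfies the relations and, for every group L, every homomorphism
   f : H -> L and every s in L satisfying the relations, there is a unique homomorphism
   g : G -> L with g o iota = f and g t = s. *)
Definition hnn_relations {H L : group} (K : H -> Prop) (phi : H -> H)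
    (f : H -> L) (s : L) : Prop :=
  forall k, K k -> gmul s (gmul (f k) (ginv s)) = f (phi k).

Definition is_HNN_extension (H : group) (K : H -> Prop) (phi : H -> H)
    (G : group) (iota : H -> G) (t : G) : Prop :=
  is_hom iota /\ hnn_relations K phi iota t /\
  forall (L : group) (f : H -> L) (s : L),
    is_hom f -> hnn_relations K phi f s ->
    (exists g : G -> L, is_hom g /\ (forall h, g (iota h) = f h) /\ g t = s) /\
    (forall g1 g2 : G -> L,
        is_hom g1 -> (forall h, g1 (iota h) = f h) -> g1 t = s ->
        is_hom g2 -> (forall h, g2 (iota h) = f h) -> g2 t = s ->
        forall x, g1 x = g2 x).

Definition ZxZ : group.
Proof.
  refine (@Group (Z * Z)%type
            (fun a b => (fst a + fst b, snd a + snd b)%Z) (0%Z, 0%Z)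
            (fun a => (- fst a, - snd a)%Z) _ _ _ _ _).
  - intros [a b] [c d] [e f]; simpl; f_equal; ring.
  - intros [a b]; simpl; reflexivity.
  - intros [a b]; simpl; f_equal; ring.
  - intros [a b]; simpl; f_equal; ring.
  - intros [a b]; simpl; f_equal; ring.
Defined.

From Stdlib Require Import ZArith Lia FunctionalExtensionality ProofIrrelevance ClassicalEpsilon.

(* Pick n in N_H(K) \ K and k in K of infinite order, and put
   c = iota(n)^-1 t^-1 iota(phi n) t.  As n normalises K, c commutes with iota(k), so
   (a, b) |-> c^a iota(k)^b is a homomorphism from Z x Z.  Injectivity comes from
   permutation representations of G on the set H: iota(h) acts by left multiplication
   and t by phi o rho, where rho is any permutation commuting with left multiplications
   by elements of K; c then acts as the commutator [lambda_n, rho].  For rho = id, c acts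
   trivially while iota(k) acts with infinite order, which forces b = 0.  For rho the
   right multiplication by k on K (and the identity off K), c acts on K as right
   multiplication by k, because n K k misses K; so c has infinite order and a = 0. *)

Lemma gmulA_r {G : group} (x y z : G) : gmul (gmul x y) z = gmul x (gmul y z).
Proof. symmetry; apply gmulA. Qed.

Lemma gmulKl {G : group} (x r : G) : gmul (ginv x) (gmul x r) = r.
Proof. rewrite gmulA, gmulVl, gmul1l; reflexivity. Qed.

Lemma gmulKr {G : group} (x r : G) : gmul x (gmul (ginv x) r) = r.
Proof. rewrite gmulA, gmulVr, gmul1l; reflexivity. Qed.

Lemma ginv_unique {G : group} (a b : G) : gmul a b = gone -> a = ginv b.
Proof. intro E. rewrite <- (gmul1r _ a), <- (gmulVr _ b), gmulA, E, gmul1l. reflexivity. Qed.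

Lemma ginvM {G : group} (x y : G) : ginv (gmul x y) = gmul (ginv y) (ginv x).
Proof. symmetry; apply ginv_unique. rewrite gmulA_r, gmulKl, gmulVl. reflexivity. Qed.

Lemma ginvK {G : group} (x : G) : ginv (ginv x) = x.
Proof. symmetry; apply ginv_unique, gmulVr. Qed.

Lemma ginv1 {G : group} : ginv (@gone G) = gone.
Proof. symmetry; apply ginv_unique, gmul1l. Qed.

#[local] Hint Rewrite @gmulA_r @gmulKl @gmulKr @gmulVl @gmulVr @gmul1l @gmul1r
  @ginvM @ginvK @ginv1 : group_simpl.
Ltac gsimpl := autorewrite with group_simpl.

Lemma ginv_eq1 {G : group} (x : G) : ginv x = gone -> x = gone.
Proof. intro E. rewrite <- (ginvK x), E. apply ginv1. Qed.

Definition comm {G : group} (x y : G) : Prop := gmul x y = gmul y x.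

Definition commg {G : group} (x y : G) : G := gmul (ginv x) (gmul (ginv y) (gmul x y)).

Lemma commg1 {G : group} (x : G) : commg x gone = gone.
Proof. unfold commg; gsimpl; reflexivity. Qed.

Lemma gpowSr {G : group} (x : G) m : gpow x (S m) = gmul (gpow x m) x.
Proof.
  induction m as [|m IHm]; simpl in *; [gsimpl; reflexivity|].
  rewrite gmulA_r, <- IHm. reflexivity.
Qed.

Lemma gpow1 {G : group} m : gpow (@gone G) m = gone.
Proof. induction m as [|m IHm]; simpl; [reflexivity|]. rewrite IHm; apply gmul1l. Qed.

Lemma comm_gpow {G : group} (x y : G) m : comm x y -> comm x (gpow y m).
Proof.
  unfold comm; intro E. induction m as [|m IHm]; simpl.
  - gsimpl; reflexivity.
  - rewrite gmulA, E, gmulA_r, IHm, gmulA. reflexivity.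
Qed.

Lemma comm_ginv {G : group} (x y : G) : comm x y -> comm x (ginv y).
Proof.
  unfold comm; intro E.
  transitivity (gmul (gmul (ginv y) (gmul y x)) (ginv y)); [gsimpl; reflexivity|].
  rewrite <- E. gsimpl. reflexivity.
Qed.

Lemma comm_sym {G : group} (x y : G) : comm x y -> comm y x.
Proof. unfold comm; intros; symmetry; assumption. Qed.

Definition zpow {G : group} (x : G) (a : Z) : G :=
  if (0 <=? a)%Z then gpow x (Z.to_nat a) else ginv (gpow x (Z.to_nat (- a))).

Lemma zpow0 {G : group} (x : G) : zpow x 0 = gone.
Proof. reflexivity. Qed.

Lemma zpow1 {G : group} a : zpow (@gone G) a = gone.
Proof. unfold zpow. destruct (0 <=? a)%Z; rewrite gpow1; [reflexivity | apply ginv1]. Qed.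

Lemma zpowSr {G : group} (x : G) a : zpow x (a + 1) = gmul (zpow x a) x.
Proof.
  unfold zpow. destruct (Z.leb_spec 0 a).
  - rewrite (proj2 (Z.leb_le 0 (a + 1))) by lia.
    replace (Z.to_nat (a + 1)) with (S (Z.to_nat a)) by lia. apply gpowSr.
  - destruct (Z.leb_spec 0 (a + 1)).
    + replace a with (-1)%Z by lia. simpl. gsimpl. reflexivity.
    + replace (Z.to_nat (- a)) with (S (Z.to_nat (- (a + 1)))) by lia.
      simpl. gsimpl. reflexivity.
Qed.

Lemma zpowPr {G : group} (x : G) a : zpow x (Z.pred a) = gmul (zpow x a) (ginv x).
Proof.
  pose proof (zpowSr x (Z.pred a)) as E.
  replace (Z.pred a + 1)%Z with a in E by lia. rewrite E. gsimpl. reflexivity.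
Qed.

Lemma zpowD {G : group} (x : G) a b : zpow x (a + b) = gmul (zpow x a) (zpow x b).
Proof.
  revert a. induction b as [|b IHb|b IHb] using Z.peano_ind; intro a.
  - rewrite Z.add_0_r, zpow0, gmul1r. reflexivity.
  - unfold Z.succ. rewrite Z.add_assoc, !zpowSr, IHb. gsimpl. reflexivity.
  - replace (a + Z.pred b)%Z with (Z.pred (a + b)) by lia.
    rewrite !zpowPr, IHb. gsimpl. reflexivity.
Qed.

Lemma comm_zpow {G : group} (x y : G) a : comm x y -> comm x (zpow y a).
Proof.
  intro E. unfold zpow. destruct (0 <=? a)%Z.
  - apply comm_gpow, E.
  - apply comm_ginv, comm_gpow, E.
Qed.

Lemma zpow_eq1_infinite_order {G : group} (x : G) a :
  infinite_order x -> zpow x a = gone -> a = 0%Z.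
Proof.
  intros Hx. unfold zpow.
  assert (Habs : gpow x (Z.abs_nat a) = gone -> a = 0%Z).
  { destruct (Z.abs_nat a) as [|m] eqn:Ea; [lia|]. intro E; destruct (Hx m E). }
  destruct (Z.leb_spec 0 a); intro E; apply Habs.
  - replace (Z.abs_nat a) with (Z.to_nat a) by lia. exact E.
  - replace (Z.abs_nat a) with (Z.to_nat (- a)) by lia. apply ginv_eq1, E.
Qed.

Lemma hom1 {G L : group} (f : G -> L) : is_hom f -> f gone = gone.
Proof.
  intro Hf. rewrite <- (gmulKl (f gone) (f gone)), <- Hf, gmul1l. apply gmulVl.
Qed.

Lemma homV {G L : group} (f : G -> L) : is_hom f -> forall x, f (ginv x) = ginv (f x).
Proof. intros Hf x. apply ginv_unique. rewrite <- Hf, gmulVl. apply hom1, Hf. Qed.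

Lemma hom_gpow {G L : group} (f : G -> L) :
  is_hom f -> forall x m, f (gpow x m) = gpow (f x) m.
Proof.
  intros Hf x m. induction m as [|m IHm]; simpl.
  - apply hom1, Hf.
  - rewrite Hf, IHm. reflexivity.
Qed.

Lemma hom_zpow {G L : group} (f : G -> L) :
  is_hom f -> forall x a, f (zpow x a) = zpow (f x) a.
Proof.
  intros Hf x a. unfold zpow. destruct (0 <=? a)%Z.
  - apply hom_gpow, Hf.
  - rewrite homV, hom_gpow by exact Hf. reflexivity.
Qed.

Lemma infinite_order_hom {G L : group} (f : G -> L) (x : G) :
  is_hom f -> infinite_order (f x) -> infinite_order x.
Proof. intros Hf Hfx m E. apply (Hfx m). rewrite <- hom_gpow, E by exact Hf. apply hom1, Hf. Qed.

Lemma injective_hom {G L : group} (f : G -> L) :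
  is_hom f -> (forall x, f x = gone -> x = gone) -> injective f.
Proof.
  intros Hf Hker x y E. rewrite <- (gmulKr y x). f_equal.
  rewrite (Hker (gmul (ginv y) x)); [gsimpl; reflexivity|].
  rewrite Hf, homV, E by exact Hf. apply gmulVl.
Qed.

Lemma ZxZ_embedding {G : group} (x y : G) :
  comm x y ->
  (forall a b, gmul (zpow x a) (zpow y b) = gone -> a = 0%Z /\ b = 0%Z) ->
  exists f : ZxZ -> G, is_hom f /\ injective f.
Proof.
  intros Hxy Hindep.
  exists (fun p : ZxZ => gmul (zpow x (fst p)) (zpow y (snd p))).
  assert (Hhom : is_hom (fun p : ZxZ => gmul (zpow x (fst p)) (zpow y (snd p)))).
  { intros [a b] [a' b']. simpl. rewrite !zpowD. gsimpl. f_equal.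
    rewrite !gmulA, (comm_zpow _ _ a' (comm_sym _ _ (comm_zpow _ _ b Hxy))).
    reflexivity. }
  split; [exact Hhom|].
  apply injective_hom; [exact Hhom|].
  intros [a b] E. destruct (Hindep a b E) as [-> ->]. reflexivity.
Qed.

Record perm (X : Type) := Perm {
  pfun : X -> X;
  pfun_inv : X -> X;
  pfunK : forall x, pfun (pfun_inv x) = x;
  pfun_invK : forall x, pfun_inv (pfun x) = x
}.
Arguments Perm {X}.
Arguments pfun {X}.
Arguments pfun_inv {X}.
Arguments pfunK {X}.
Arguments pfun_invK {X}.

Lemma perm_ext {X : Type} (p q : perm X) : (forall x, pfun p x = pfun q x) -> p = q.
Proof.
  destruct p as [f1 g1 fK1 gK1], q as [f2 g2 fK2 gK2]; simpl; intro E.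
  assert (f1 = f2) as <- by (apply functional_extensionality, E).
  assert (g1 = g2) as <-.
  { apply functional_extensionality; intro x. rewrite <- (fK2 x) at 1. apply gK1. }
  f_equal; apply proof_irrelevance.
Qed.

Definition perm_mul {X : Type} (p q : perm X) : perm X.
Proof.
  refine (Perm (fun x => pfun p (pfun q x)) (fun x => pfun_inv q (pfun_inv p x)) _ _);
    intro x; rewrite ?pfunK, ?pfun_invK; reflexivity.
Defined.

Definition Sym (X : Type) : group.
Proof.
  refine (@Group (perm X) perm_mul
            (Perm (fun x => x) (fun x => x) (fun _ => eq_refl) (fun _ => eq_refl))
            (fun p => Perm (pfun_inv p) (pfun p) (pfun_invK p) (pfunK p)) _ _ _ _ _);
    intros; apply perm_ext; intros; simpl; rewrite ?pfunK, ?pfun_invK; reflexivity.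
Defined.

Definition lmul {H : group} (h : H) : Sym H :=
  Perm (gmul h) (gmul (ginv h)) (gmulKr h) (gmulKl h).

Lemma lmul_hom {H : group} : is_hom (@lmul H).
Proof. intros x y. apply perm_ext; intro z; simpl. apply gmulA_r. Qed.

Lemma lmul_infinite_order {H : group} (x : H) : infinite_order x -> infinite_order (lmul x).
Proof.
  intros Hx m E. apply (Hx m).
  rewrite <- (gmul1r _ (gpow x (S m))).
  change (pfun (lmul (gpow x (S m))) gone = gone).
  rewrite hom_gpow, E by exact lmul_hom. reflexivity.
Qed.

Definition aut_perm {H : group} (phi : H -> H) (Hphi : is_aut phi) : Sym H.
Proof.
  pose (phi_inv y := proj1_sig (constructive_indefinite_description _ (proj2 (proj2 Hphi) y))).
  assert (phiK : forall y, phi (phi_inv y) = y).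
  { intro y. exact (proj2_sig (constructive_indefinite_description _ (proj2 (proj2 Hphi) y))). }
  refine (Perm phi phi_inv phiK _).
  intro x. apply (proj1 (proj2 Hphi)), phiK.
Defined.

Lemma aut_perm_lmul {H : group} (phi : H -> H) (Hphi : is_aut phi) (h : H) (r : Sym H) :
  gmul (lmul (phi h)) (gmul (aut_perm phi Hphi) r) = gmul (aut_perm phi Hphi) (gmul (lmul h) r).
Proof. apply perm_ext; intro y; simpl. symmetry; apply (proj1 Hphi). Qed.

Section RightMultiplicationOnSubgroup.

Context {H : group} (K : H -> Prop) (K_subgroup : is_subgroup K).

Lemma subgroup_mulr (k y : H) : K k -> K (gmul y k) <-> K y.
Proof.
  destruct K_subgroup as [_ [K_mul K_inv]]. intro Hk; split; intro Hy.
  - rewrite <- (gmul1r _ y), <- (gmulVr _ k), gmulA. auto.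
  - auto.
Qed.

Lemma subgroup_mull (k y : H) : K k -> K (gmul k y) <-> K y.
Proof.
  destruct K_subgroup as [_ [K_mul K_inv]]. intro Hk; split; intro Hy.
  - rewrite <- (gmulKl k y). auto.
  - auto.
Qed.

Definition rmul_in (k y : H) : H :=
  if excluded_middle_informative (K y) then gmul y k else y.

Lemma rmul_in_in (k y : H) : K y -> rmul_in k y = gmul y k.
Proof. unfold rmul_in; destruct (excluded_middle_informative (K y)); tauto. Qed.

Lemma rmul_in_out (k y : H) : ~ K y -> rmul_in k y = y.
Proof. unfold rmul_in; destruct (excluded_middle_informative (K y)); tauto. Qed.

Lemma rmul_inVK (k y : H) : K k -> rmul_in k (rmul_in (ginv k) y) = y.
Proof.
  intro Hk. assert (Hk' : K (ginv k)) by exact (proj2 (proj2 K_subgroup) k Hk).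
  destruct (classic (K y)) as [Hy | Hy].
  - rewrite (rmul_in_in (ginv k) y Hy), rmul_in_in by (apply subgroup_mulr; assumption).
    gsimpl. reflexivity.
  - rewrite (rmul_in_out (ginv k) y Hy), rmul_in_out; auto.
Qed.

Lemma rmul_inKV (k y : H) : K k -> rmul_in (ginv k) (rmul_in k y) = y.
Proof.
  intro Hk. rewrite <- (ginvK k) at 2.
  apply rmul_inVK, (proj2 (proj2 K_subgroup)), Hk.
Qed.

Lemma rmul_in_lmul (k h y : H) : K h -> rmul_in k (gmul h y) = gmul h (rmul_in k y).
Proof.
  intro Hh. destruct (classic (K y)) as [Hy | Hy].
  - rewrite !rmul_in_in by (try apply subgroup_mull; assumption). apply gmulA_r.
  - rewrite !rmul_in_out; [reflexivity | assumption |].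
    rewrite subgroup_mull; assumption.
Qed.

Definition rmul_perm (k : H) (Hk : K k) : Sym H :=
  Perm (rmul_in k) (rmul_in (ginv k)) (fun y => rmul_inVK k y Hk) (fun y => rmul_inKV k y Hk).

Lemma rmul_perm_comm_lmul (k h : H) (Hk : K k) : K h -> comm (rmul_perm k Hk) (lmul h).
Proof. intro Hh. apply perm_ext; intro y; simpl. apply rmul_in_lmul, Hh. Qed.

Lemma commg_lmul_rmul_perm (n k y : H) (Hk : K k) :
  ~ K n -> K y -> pfun (commg (lmul n) (rmul_perm k Hk)) y = gmul y k.
Proof.
  intros Hn Hy. simpl. rewrite (rmul_in_in k y Hy), rmul_in_out; [gsimpl; reflexivity|].
  intro Hnyk. apply Hn.
  rewrite gmulA, (subgroup_mulr k), (subgroup_mulr y) in Hnyk; assumption.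
Qed.

Lemma subgroup_gpow (k : H) m : K k -> K (gpow k m).
Proof.
  destruct K_subgroup as [K_one [K_mul _]]. intro Hk.
  induction m as [|m IHm]; simpl; auto.
Qed.

Lemma infinite_order_perm_acting_by_rmul (p : Sym H) (k : H) :
  K k -> infinite_order k -> (forall y, K y -> pfun p y = gmul y k) -> infinite_order p.
Proof.
  intros Hk Hinf Hp.
  assert (Hpow : forall m y, K y -> pfun (gpow p m) y = gmul y (gpow k m)).
  { induction m as [|m IHm]; intros y Hy; [simpl; gsimpl; reflexivity|].
    change (pfun p (pfun (gpow p m) y) = gmul y (gpow k (S m))).
    rewrite IHm, Hp, gpowSr
      by first [exact Hy | exact (proj2 (subgroup_mulr _ _ (subgroup_gpow k m Hk)) Hy)].
    gsimpl. reflexivity. }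
  intros m E. apply (Hinf m).
  rewrite <- (gmul1l _ (gpow k (S m))), <- Hpow, E by exact (proj1 K_subgroup).
  reflexivity.
Qed.

End RightMultiplicationOnSubgroup.

Section HNNExtension.

Context {H G : group} (phi : H -> H) (K : H -> Prop) (iota : H -> G) (t : G).
Hypothesis phi_aut : is_aut phi.
Hypothesis K_subgroup : is_subgroup K.
Hypothesis HNN : is_HNN_extension H K phi G iota t.

Lemma iota_mul (a b : H) (r : G) :
  gmul (iota a) (gmul (iota b) r) = gmul (iota (gmul a b)) r.
Proof. rewrite (proj1 HNN). gsimpl. reflexivity. Qed.

Lemma hnn_conj (k : H) (r : G) :
  K k -> gmul t (gmul (iota k) r) = gmul (iota (phi k)) (gmul t r).
Proof. intro Hk. rewrite <- (proj1 (proj2 HNN) k Hk). gsimpl. reflexivity. Qed.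

Lemma hnn_conjV (k : H) (r : G) :
  K k -> gmul (ginv t) (gmul (iota (phi k)) r) = gmul (iota k) (gmul (ginv t) r).
Proof. intro Hk. rewrite <- (proj1 (proj2 HNN) k Hk). gsimpl. reflexivity. Qed.

Definition defect (n : H) : G :=
  gmul (iota (ginv n)) (gmul (ginv t) (gmul (iota (phi n)) t)).

Lemma defect_comm (n k : H) : normalizer K n -> K k -> comm (defect n) (iota k).
Proof.
  intros Hn Hk. unfold comm, defect. gsimpl.
  set (k' := gmul n (gmul k (ginv n))).
  assert (Hk' : K k') by exact (proj1 (Hn k) Hk).
  assert (Ephi : gmul (phi n) (phi k) = gmul (phi k') (phi n)).
  { rewrite <- !(proj1 phi_aut). unfold k'. gsimpl. reflexivity. }
  rewrite <- (gmul1r _ (iota k)) at 1.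
  rewrite hnn_conj, gmul1r, iota_mul, Ephi, <- iota_mul, hnn_conjV, !iota_mul by assumption.
  unfold k'. gsimpl. reflexivity.
Qed.

Lemma hnn_twisted_rep (rho : Sym H) :
  (forall k, K k -> comm rho (lmul k)) ->
  exists g : G -> Sym H, is_hom g /\ (forall h, g (iota h) = lmul h) /\
    (forall n, g (defect n) = commg (lmul n) rho).
Proof.
  intro Hrho.
  set (s := gmul (aut_perm phi phi_aut) rho).
  assert (Hrel : hnn_relations K phi lmul s).
  { intros k Hk. unfold s. gsimpl.
    rewrite (gmulA _ rho), Hrho by exact Hk. gsimpl.
    rewrite <- aut_perm_lmul. gsimpl. reflexivity. }
  destruct (proj1 (proj2 (proj2 HNN) _ lmul s lmul_hom Hrel)) as [g [g_hom [g_iota g_t]]].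
  exists g. split; [exact g_hom|]. split; [exact g_iota|].
  intro n. unfold defect, commg.
  rewrite !g_hom, (homV g g_hom), !g_iota, g_t, (homV lmul lmul_hom). unfold s. gsimpl.
  rewrite aut_perm_lmul. gsimpl. reflexivity.
Qed.

Lemma defect_infinite_order (n k : H) :
  ~ K n -> K k -> infinite_order k -> infinite_order (defect n).
Proof.
  intros Hn Hk Hinf.
  destruct (hnn_twisted_rep (rmul_perm K K_subgroup k Hk)) as [g [g_hom [_ g_defect]]].
  { intros h Hh. apply rmul_perm_comm_lmul, Hh. }
  apply (infinite_order_hom g _ g_hom). rewrite g_defect.
  apply (infinite_order_perm_acting_by_rmul K K_subgroup _ k Hk Hinf).
  intros y Hy. apply commg_lmul_rmul_perm; assumption.
Qed.

Lemma defect_zpow_independent (n k : H) (a b : Z) :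
  ~ K n -> K k -> infinite_order k ->
  gmul (zpow (defect n) a) (zpow (iota k) b) = gone -> a = 0%Z /\ b = 0%Z.
Proof.
  intros Hn Hk Hinf E.
  assert (b = 0%Z) as ->.
  { destruct (hnn_twisted_rep gone) as [g [g_hom [g_iota g_defect]]].
    { intros h _. unfold comm. gsimpl. reflexivity. }
    apply (f_equal g) in E.
    rewrite g_hom, !(hom_zpow g g_hom), g_defect, commg1, zpow1, gmul1l, g_iota,
      (hom1 g g_hom) in E.
    exact (zpow_eq1_infinite_order _ _ (lmul_infinite_order k Hinf) E). }
  rewrite zpow0, gmul1r in E.
  split; [|reflexivity].
  exact (zpow_eq1_infinite_order _ _ (defect_infinite_order n k Hn Hk Hinf) E).
Qed.

End HNNExtension.

Theorem theoremC (H : group) (phi : H -> H) (K : H -> Prop)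
  (Hphi : is_aut phi) (HK : is_subgroup K) (Hprop : proper_sub K)
  (HN : proper_in_normalizer K)
  (Hinf : exists k, K k /\ infinite_order k)
  (G : group) (iota : H -> G) (t : G)
  (HG : is_HNN_extension H K phi G iota t) :
  exists f : ZxZ -> G, is_hom f /\ injective f.
Proof.
  (* [Hprop] is implied by [HN]. *)
  destruct Hinf as [k [Hk Hk_inf]], HN as [n [Hn_norm Hn_out]].
  apply (ZxZ_embedding (defect phi iota t n) (iota k)).
  - apply (defect_comm phi K iota t Hphi HG); assumption.
  - intros a b. apply (defect_zpow_independent phi K iota t Hphi HK HG); assumption.
Qed.
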